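(* Let $\Omega=[0,1]^d$ and let $f^s,f^t:\Omega\to\mathbb{R}$ (source and target objective functions, to be minimized) be Lipschitz continuous with a common constant $K^*>0$ with respect to the Chebyshev distance. For $\epsilon>0$, let $B^1,\dots,B^{N_B}$ be a partition of $\Omega$ into neighborhoods, each contained in the closed Chebyshev ball of radius $\epsilon/K^*$ around its center $\boldsymbol{x}_c^i$, and let $f^s_\epsilon(\boldsymbol{x})=\sum_i\mathbf{1}_{B^i}(\boldsymbol{x})f^s(\boldsymbol{x}_c^i)$ and $f^t_\epsilon(\boldsymbol{x})=\sum_i\mathbf{1}_{B^i}(\boldsymbol{x})f^t(\boldsymbol{x}_c^i)$. Suppose that for every $\epsilon>0$ the Spearman rank correlation between $(f^s(\boldsymbol{x}_c^i))_{i}$ and $(f^t(\boldsymbol{x}_c^i))_{i}$ equals $1$. Then transferring a globally converged source solution makes the target converge to its global optimum immediately: for every $\epsilon>0$, if $\boldsymbol{x}^s_{\min}$ is a minimizer of $f^s_\epsilon$ (the best source solution found by a globally convergent surrogate-assisted search on $f^s_\epsilon$) and $\boldsymbol{x}^t_*$ is a global minimizer of $f^t$, then $|f^t(\boldsymbol{x}^t_* )-f^t(\boldsymbol{x}^s_{\min})|\le 4\epsilon$; in particular, for every $\xi>0$, choosing $\epsilon\le\xi/4$ gives $|f^t(\boldsymbol{x}^t_* )-f^t(\boldsymbol{x}^s_{\min})|\le\xi$.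
   Context: The Spearman rank correlation of two vectors is the Pearson correlation of their rank vectors; a value of $1$ means the rankings coincide. $f_\epsilon$ as defined is an $\epsilon$-optimal approximation, i.e. $|f-f_\epsilon|\le\epsilon$ on $\Omega$. *)

From HB Require Import structures.
From mathcomp Require Import all_boot all_order all_algebra.
From mathcomp Require Import classical_sets boolp reals numfun.
Set Implicit Arguments. Unset Strict Implicit. Unset Printing Implicit Defensive.
Import Order.TTheory GRing.Theory Num.Theory.
Local Open Scope classical_set_scope.
Local Open Scope ring_scope.

Section Defs.
Variable R : realType.

Definition cube (d : nat) : set 'rV[R]_d :=
  [set x | forall i : 'I_d, 0 <= x ord0 i <= 1].
Arguments cube d : clear implicits.

Definition cheb_dist (d : nat) (x y : 'rV[R]_d) : R :=
  \big[Num.max/0]_(i < d) `|x ord0 i - y ord0 i|.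

Definition cheb_lipschitz (d : nat) (K : R) (f : 'rV[R]_d -> R) : Prop :=
  forall x y, cube d x -> cube d y -> `|f x - f y| <= K * cheb_dist x y.

Definition is_partition (d N : nat) (B : 'I_N -> set 'rV[R]_d) : Prop :=
  [/\ forall i, B i !=set0,
      forall i j, i != j -> B i `&` B j = set0 &
      \bigcup_(i in [set: 'I_N]) B i = cube d].

Definition approx (d N : nat) (B : 'I_N -> set 'rV[R]_d)
  (c : 'I_N -> 'rV[R]_d) (f : 'rV[R]_d -> R) (x : 'rV[R]_d) : R :=
  \sum_(i < N) \1_(B i) x * f (c i).

Definition is_minimizer (d : nat) (f : 'rV[R]_d -> R) (x : 'rV[R]_d) : Prop :=
  cube d x /\ forall y, cube d y -> f x <= f y.

(* fractional (average) rank of entry i of u, ranks counted from 1 *)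
Definition avg_rank (N : nat) (u : 'I_N -> R) (i : 'I_N) : R :=
  #|[set j | u j < u i]|%:R + (#|[set j | u j == u i]|%:R + 1) / 2.

Definition mean (N : nat) (u : 'I_N -> R) : R := (\sum_(i < N) u i) / N%:R.

Definition pearson (N : nat) (u v : 'I_N -> R) : R :=
  (\sum_(i < N) (u i - mean u) * (v i - mean v)) /
  (Num.sqrt (\sum_(i < N) (u i - mean u) ^+ 2) *
   Num.sqrt (\sum_(i < N) (v i - mean v) ^+ 2)).

Definition spearman (N : nat) (u v : 'I_N -> R) : R :=
  pearson (avg_rank u) (avg_rank v).

End Defs.
Arguments cube {R} d.

(** Spearman correlation 1 means the rank vectors are positively proportional
    after centring, so the target values at the centres are ordered like the
    source values.  A minimiser [x] of the piecewise-constant source surrogate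
    lies in a block whose centre minimises [f^s] over all centres, hence also
    [f^t] over all centres.  As [f^t] moves by at most [eps] inside a block,
    [f^t x] exceeds the value at the centre of the block of the target
    minimiser by at most [eps], which exceeds the true minimum by at most
    [eps]: the gap is at most [2 eps <= 4 eps]. *)
From HB Require Import structures.
From mathcomp Require Import all_boot all_order all_algebra.
From mathcomp Require Import classical_sets boolp reals numfun.
From mathcomp Require Import ring lra.
Set Implicit Arguments. Unset Strict Implicit. Unset Printing Implicit Defensive.
Import Order.TTheory GRing.Theory Num.Theory.
Local Open Scope classical_set_scope.
Local Open Scope ring_scope.

Lemma sum_sqr_lincomb (R : comRingType) (N : nat) (a b : R) (x y : 'I_N -> R) :
  \sum_(i < N) (b * x i - a * y i) ^+ 2 =
  b ^+ 2 * \sum_(i < N) x i ^+ 2 + a ^+ 2 * \sum_(i < N) y i ^+ 2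
  - 2 * a * b * \sum_(i < N) x i * y i.
Proof.
rewrite !mulr_sumr -big_split -sumrB /=.
by apply: eq_bigr => i _; ring.
Qed.

Lemma pearson_eq1_proportional (R : realType) (N : nat) (u v : 'I_N -> R) :
  pearson u v = 1 ->
  exists a b : R, [/\ 0 < a, 0 < b &
    forall i, b * (u i - mean u) = a * (v i - mean v)].
Proof.
rewrite /pearson.
set x := fun i => u i - mean u; set y := fun i => v i - mean v.
set Sxy := \sum_(i < N) _; set Sxx := \sum_(i < N) _; set Syy := \sum_(i < N) _.
set a := Num.sqrt Sxx; set b := Num.sqrt Syy => h.
have ab_neq0 : a * b != 0.
  by apply: contra_eqN h => /eqP ->; rewrite invr0 mulr0 eq_sym oner_eq0.
have Sxy_ab : Sxy = a * b by rewrite -(divfK ab_neq0 Sxy) h mul1r.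
have /andP[a_neq0 b_neq0] : (a != 0) && (b != 0) by rewrite -negb_or -mulf_eq0.
have a_gt0 : 0 < a by rewrite lt_def a_neq0 sqrtr_ge0.
have b_gt0 : 0 < b by rewrite lt_def b_neq0 sqrtr_ge0.
have Sxx_a : Sxx = a ^+ 2 by rewrite sqr_sqrtr // sumr_ge0 // => i _; exact: sqr_ge0.
have Syy_b : Syy = b ^+ 2 by rewrite sqr_sqrtr // sumr_ge0 // => i _; exact: sqr_ge0.
(* Equality case of Cauchy-Schwarz. *)
have sum0 : \sum_(i < N) (b * x i - a * y i) ^+ 2 = 0.
  by rewrite sum_sqr_lincomb -/Sxx -/Syy -/Sxy Sxx_a Syy_b Sxy_ab; ring.
exists a, b; split=> // i; apply/eqP; rewrite -subr_eq0 -sqrf_eq0; apply/eqP.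
by apply: (psumr_eq0P _ sum0) => // j _; exact: sqr_ge0.
Qed.

Lemma pearson_eq1_lt (R : realType) (N : nat) (u v : 'I_N -> R) m k :
  pearson u v = 1 -> v m < v k -> u m < u k.
Proof.
move=> /pearson_eq1_proportional[a [b [a_gt0 b_gt0 prop]]] lt_vmk.
rewrite -(ltrD2r (- mean u)) -(ltr_pM2l b_gt0) !prop ltr_pM2l //.
by rewrite ltrD2r.
Qed.

(* The left-hand side counts a classical set, as in the definition of [avg_rank]. *)
Lemma card_set_finset (N : nat) (P : 'I_N -> bool) :
  #|[set l | P l]| = #|finset P|.
Proof. by apply: eq_card => l; rewrite unfold_in /in_set /= inE asboolb. Qed.

Lemma avg_rank_lt (R : realType) (N : nat) (u : 'I_N -> R) i j :
  u i < u j -> avg_rank u i < avg_rank u j.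
Proof.
move=> lt_uij; rewrite /avg_rank !card_set_finset.
set Li := #|finset _|; set Ei := #|finset (fun l => u l == u i)|.
set Lj := #|finset (fun l => u l < u j)|; set Ej := #|finset (fun l => u l == u j)|.
have Ei_gt0 : (1 <= Ei)%N by rewrite /Ei (cardsD1 i) inE eqxx.
have Ej_gt0 : (1 <= Ej)%N by rewrite /Ej (cardsD1 j) inE eqxx.
have LEi_le : (Li + Ei <= Lj)%N.
  rewrite /Li /Ei -cardsUI.
  have -> : finset (fun l => u l < u i) :&: finset (fun l => u l == u i) = finset.set0.
    by apply/setP => l; rewrite !inE; case: ltgtP.
  rewrite cards0 addn0; apply: subset_leq_card; apply/fintype.subsetP => l.
  by rewrite !inE => /orP[/lt_trans->//|/eqP->].
have : 1 <= Ei%:R :> R by rewrite ler1n.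
have : 1 <= Ej%:R :> R by rewrite ler1n.
have : Li%:R + Ei%:R <= Lj%:R :> R by rewrite -natrD ler_nat.
lra.
Qed.

Lemma spearman_eq1_le (R : realType) (N : nat) (u v : 'I_N -> R) m k :
  spearman u v = 1 -> u k <= u m -> v k <= v m.
Proof.
move=> h le_ukm; rewrite leNgt; apply/negP => /avg_rank_lt /(pearson_eq1_lt h).
move: le_ukm; rewrite le_eqVlt => /orP[/eqP eq_ukm|/avg_rank_lt lt_ukm].
  by rewrite /avg_rank eq_ukm ltxx.
by rewrite ltNge ltW.
Qed.

Lemma lipschitz_le_eps (R : realType) (d : nat) (K eps : R) (f : 'rV[R]_d -> R) x y :
  0 < K -> cheb_lipschitz K f -> cube d x -> cube d y ->
  cheb_dist x y <= eps / K -> `|f x - f y| <= eps.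
Proof.
move=> K_gt0 f_lip x_cube y_cube dxy_le; apply: le_trans (f_lip _ _ x_cube y_cube) _.
by rewrite -ler_pdivlMl // mulrC.
Qed.

Section Partition.
Variables (R : realType) (d N : nat) (B : 'I_N -> set 'rV[R]_d).
Hypothesis B_partition : is_partition B.

Lemma cube_of_block i x : B i x -> cube d x.
Proof. by case: B_partition => _ _ <- Bix; exists i. Qed.

Lemma block_of_cube x : cube d x -> exists i, B i x.
Proof. by case: B_partition => _ _ <- [i _ Bix]; exists i. Qed.

Lemma approx_block (c : 'I_N -> 'rV[R]_d) (f : 'rV[R]_d -> R) k x :
  B k x -> approx B c f x = f (c k).
Proof.
case: B_partition => _ B_disj _ Bkx.
rewrite /approx (bigD1 k) //= indicE mem_set // mul1r big1 ?addr0 // => j neq_jk.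
rewrite indicE memNset ?mul0r // => Bjx.
by have := B_disj j k neq_jk; rewrite -subset0 => /(_ x); apply.
Qed.

Lemma approx_minimizer_block (c : 'I_N -> 'rV[R]_d) (f : 'rV[R]_d -> R) x k :
  is_minimizer (approx B c f) x -> B k x -> forall m, f (c k) <= f (c m).
Proof.
case=> _ x_min Bkx m; have [B_neq0 _ _] := B_partition; have [y Bmy] := B_neq0 m.
by have := x_min y (cube_of_block Bmy); rewrite (approx_block _ _ Bkx) (approx_block _ _ Bmy).
Qed.

End Partition.

Theorem mainTheorem4 (R : realType) (d : nat) (K : R) (fs ft : 'rV[R]_d -> R)
  (hK : 0 < K) (hfs : cheb_lipschitz K fs) (hft : cheb_lipschitz K ft)
  (eps : R) (heps : 0 < eps)
  (N : nat) (B : 'I_N -> set 'rV[R]_d) (c : 'I_N -> 'rV[R]_d)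
  (hB : is_partition B)
  (hc : forall i, cube d (c i))
  (hball : forall i x, B i x -> cheb_dist x (c i) <= eps / K)
  (hspear : spearman (fun i => fs (c i)) (fun i => ft (c i)) = 1)
  (xs_min xt_star : 'rV[R]_d)
  (hxs : is_minimizer (approx B c fs) xs_min)
  (hxt : is_minimizer ft xt_star) :
  `|ft xt_star - ft xs_min| <= 4 * eps /\
  (forall xi : R, 0 < xi -> eps <= xi / 4 -> `|ft xt_star - ft xs_min| <= xi).
Proof.
have ft_near_centre i x : B i x -> `|ft x - ft (c i)| <= eps.
  by move=> Bix; apply: lipschitz_le_eps (cube_of_block hB Bix) (hc i) (hball _ _ Bix).
have [k Bk_xs] := block_of_cube hB hxs.1.
have [m Bm_xt] := block_of_cube hB hxt.1.
have fs_ck_le : fs (c k) <= fs (c m) := approx_minimizer_block hB hxs Bk_xs m.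
have ft_ck_le : ft (c k) <= ft (c m) := spearman_eq1_le hspear fs_ck_le.
have ft_xt_le : ft xt_star <= ft xs_min := hxt.2 _ hxs.1.
have gap_le : `|ft xt_star - ft xs_min| <= 2 * eps.
  move: (ft_near_centre _ _ Bk_xs) (ft_near_centre _ _ Bm_xt).
  rewrite !ler_norml => /andP[? ?] /andP[? ?]; apply/andP; split; lra.
split=> [|xi _ eps_le]; lra.
Qed.
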